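(* Let $n \in \mathbb{Z}^+$, let $R : H_K \to H_L$ be a homomorphism of commutative groups, and let $S \subset H_K[n]$ be a subset. (a) If $\operatorname{Ker} R = 0$, then $\# R(S) = \# S$, and for each $r \in \mathbb{Z}^+$, $S$ is $r$-LI over $\mathbb{Z}/n\mathbb{Z}$ if and only if $R(S)$ is $r$-LI over $\mathbb{Z}/n\mathbb{Z}$. (b) Suppose $\operatorname{Ker} R$ is finite and $S$ is infinite and $2$-LI over $\mathbb{Z}/n\mathbb{Z}$. Then there is a subset $S' \subset S$ such that $R(S')$ is an infinite subset of $H_L$ which is $1$-LI over $\mathbb{Z}/n\mathbb{Z}$.
   Context: For a commutative group $H$, $H[n]$ denotes its $n$-torsion subgroup. For $S \subset H[n]$ and $r \in \mathbb{Z}^+$, $S$ is $r$-LI over $\mathbb{Z}/n\mathbb{Z}$ if every $r$-element subset $\{\eta_1,\dots,\eta_r\} \subset S$ is linearly independent over $\mathbb{Z}/n\mathbb{Z}$: whenever $a_1\eta_1 + \dots + a_r\eta_r = 0$ with $a_i \in \mathbb{Z}$, we have $a_1 \equiv \dots \equiv a_r \equiv 0 \pmod n$. In particular $S$ is $1$-LI iff every element of $S$ has order exactly $n$. *)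

From HB Require Import structures.
From mathcomp Require Import all_boot all_order all_algebra.
From mathcomp Require Export classical_sets cardinality.
Set Implicit Arguments. Unset Strict Implicit. Unset Printing Implicit Defensive.
Import GRing.Theory.
Local Open Scope ring_scope.

Definition torsion (H : zmodType) (n : nat) : set H := [set x | x *+ n = 0].

(* S is r-LI over Z/nZ: every r-element subset {eta_1,..,eta_r} of S
   (i.e. r pairwise distinct elements of S) is linearly independent over Z/nZ *)
Definition rLI (H : zmodType) (n r : nat) (S : set H) : Prop :=
  forall eta : 'I_r -> H, injective eta -> (forall i, S (eta i)) ->
  forall a : 'I_r -> int, \sum_(i < r) eta i *~ a i = 0 ->
  forall i, (n%:Z %| a i)%Z.

From HB Require Import structures.
From mathcomp Require Import all_boot all_order all_algebra.
From mathcomp Require Import boolp classical_sets cardinality.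
From mathcomp Require Import zify.
Set Implicit Arguments. Unset Strict Implicit. Unset Printing Implicit Defensive.
Local Open Scope classical_set_scope.
Local Open Scope card_scope.
Local Open Scope ring_scope.
Import GRing.Theory.

(* (a) is transport of structure along the injection R.  For (b), throw away
   the elements x of S such that R (d x) = 0 for some 0 < d < n.  For a fixed d,
   2-LI makes x |-> d x injective on S, so these x map injectively into the
   finite kernel; hence only finitely many are discarded.  The images of the
   remaining ones have order exactly n, and there are infinitely many of them
   because R has finite fibres. *)

Lemma infinite_image_finite_fibers (T U : Type) (f : T -> U) (A : set T) :
  (forall y, finite_set (f @^-1` [set y])) ->
  infinite_set A -> infinite_set (f @` A).
Proof.
move=> fibers infA finfA; apply: infA.
apply: (sub_finite_set (B := \bigcup_(y in f @` A) f @^-1` [set y])).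
  by move=> x Ax; exists (f x) => //; exists x.
exact: bigcup_finite.
Qed.

Section Additive.
Variables (U V : zmodType) (f : {additive U -> V}).

Lemma finite_fiber_additive (y : V) :
  finite_set [set x | f x = 0] -> finite_set (f @^-1` [set y]).
Proof.
move=> finK; have [[x0 fx0]|no_x] := pselect (exists x0, f x0 = y); last first.
  by apply: (sub_finite_set _ (finite_set0 U)) => x fx; apply: no_x; exists x.
apply: (sub_finite_set (B := (fun k => x0 + k) @` [set x | f x = 0])).
  move=> x /= fx; exists (x - x0); first by rewrite /= raddfB fx fx0 subrr.
  by rewrite addrC subrK.
exact: finite_image.
Qed.

Lemma rLI_image_inj (n r : nat) (S : set U) :
  injective f -> rLI n r (f @` S) <-> rLI n r S.
Proof.
move=> finj; split=> LI eta eta_inj etaS a sum0.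
  apply: (LI (f \o eta)) => [i j /finj /eta_inj //|i|].
    by exists (eta i).
  rewrite (eq_bigr (fun i => f (eta i *~ a i))) => [|i _]; last first.
    by rewrite raddfMz.
  by rewrite -raddf_sum sum0 raddf0.
have /choice[xi xiP] : forall i, exists x, S x /\ f x = eta i.
  by move=> i; have [x Sx <-] := etaS i; exists x.
apply: (LI xi) => [i j xij|i|]; first by apply: eta_inj; rewrite -!(xiP _).2 xij.
  exact: (xiP i).1.
apply: finj; rewrite raddf0 -sum0 raddf_sum.
by apply: eq_bigr => i _; rewrite raddfMz (xiP i).2.
Qed.

End Additive.

Section LinearIndependence.
Variables (H : zmodType) (n : nat).
Implicit Types (S : set H) (x y : H).

Lemma rLI2_dvd S x y (a b : int) :
  rLI n 2 S -> S x -> S y -> x <> y -> x *~ a + y *~ b = 0 -> (n%:Z %| a)%Z.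
Proof.
move=> LI Sx Sy xy sum0.
pose eta (i : 'I_2) := if i == ord0 then x else y.
pose c (i : 'I_2) := if i == ord0 then a else b.
have eta_inj : injective eta.
  move=> [[|[|i]] ?] [[|[|j]] ?] //= e; try by [exfalso; apply: xy];
    exact/val_inj.
apply: (LI eta eta_inj _ c _ ord0) => [i|]; first by rewrite /eta; case: ifP.
by rewrite big_ord_recl big_ord1.
Qed.

Lemma rLI2_mulrn_inj S (d : nat) :
  rLI n 2 S -> (0 < d < n)%N -> {in S &, injective (fun x => x *+ d)}.
Proof.
move=> LI /andP[d_gt0 d_lt_n] x y; rewrite !in_setE => Sx Sy xy_d.
apply: contrapT => xy.
have := rLI2_dvd (a := d%:Z) (b := - d%:Z) LI Sx Sy xy.
rewrite mulrNz -!pmulrn xy_d subrr => /(_ erefl).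
by rewrite dvdzE /= => /(dvdn_leq d_gt0); lia.
Qed.

Lemma torsion_mulz_mod x (a : int) :
  torsion n x -> x *~ a = x *~ (a %% n%:Z)%Z.
Proof.
move=> xn; rewrite {1}(divz_eq a n%:Z) mulrzDr mulrzA mulrzAC.
by rewrite -[x *~ n%:Z]/(x *+ n) xn mul0rz add0r.
Qed.

Lemma rLI1_of_order S : (0 < n)%N ->
  S `<=` torsion n -> (forall x d, S x -> (0 < d < n)%N -> x *+ d <> 0) ->
  rLI n 1 S.
Proof.
move=> n_gt0 Stor order eta _ etaS a sum0 i; rewrite ord1.
rewrite big_ord1 (torsion_mulz_mod _ (Stor _ (etaS _))) in sum0.
have n_neq0 : n%:Z != 0 by rewrite eqz_nat -lt0n.
apply/dvdz_mod0P; move: sum0 (modz_ge0 (a ord0) n_neq0).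
have : (a ord0 %% n%:Z < n%:Z)%Z by rewrite ltz_pmod // ltz_nat.
case: (a ord0 %% n%:Z)%Z => [[|d]|//] //; rewrite ltz_nat => d_lt_n ad0 _.
by have := order _ d.+1 (etaS ord0) d_lt_n.
Qed.

End LinearIndependence.

Lemma rLI2_finite_mulrn_kernel (U V : zmodType) (f : {additive U -> V})
    (n d : nat) (S : set U) :
  rLI n 2 S -> (0 < d < n)%N -> finite_set [set x | f x = 0] ->
  finite_set [set x | S x /\ f (x *+ d) = 0].
Proof.
move=> LI d_range finK.
have dinj :
    {in [set x | S x /\ f (x *+ d) = 0] &, injective (fun x => x *+ d)}.
  by apply: sub_in2 (rLI2_mulrn_inj LI d_range) => x; rewrite !in_setE => -[].
rewrite -(eq_finite_set (inj_card_eq dinj)).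
by apply: sub_finite_set finK => _ [x [_ ?] <-].
Qed.

Theorem lemma2p2 (n : nat) (hn : (0 < n)%N) (HK HL : zmodType)
    (R : {additive HK -> HL}) (S : set HK) (hS : S `<=` @torsion HK n) :
  ((forall x, R x = 0 -> x = 0) ->
     (S #= (R @` S)) /\
     (forall r : nat, (0 < r)%N -> (rLI n r S <-> rLI n r (R @` S))))
  /\
  (finite_set [set x | R x = 0] -> infinite_set S -> rLI n 2 S ->
     exists S' : set HK, S' `<=` S /\
       infinite_set (R @` S') /\ rLI n 1 (R @` S')).
Proof.
split.
  move=> /raddf_inj Rinj; split; first exact/card_esym/inj_card_eq/(in2W Rinj).
  by move=> r _; symmetry; apply: rLI_image_inj.
move=> finK infS LI2.
pose killed :=
  \bigcup_(d in [set d | 0 < d < n]%N) [set x | S x /\ R (x *+ d) = 0].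
have fin_killed : finite_set killed.
  apply: bigcup_finite => [|d /= d_range].
    by apply: sub_finite_set (finite_II n) => d /andP[].
  exact: rLI2_finite_mulrn_kernel LI2 d_range finK.
exists (S `\` killed); split; first by move=> x [].
split.
  apply: infinite_image_finite_fibers (infinite_setD infS fin_killed).
  by move=> y; apply: finite_fiber_additive.
apply: rLI1_of_order => //.
  by move=> _ [x [Sx _] <-]; rewrite /torsion /= -raddfMn (hS _ Sx) raddf0.
move=> _ d [x [Sx not_killed] <-] d_range Rxd.
by apply: not_killed; exists d => //; split; rewrite // raddfMn.
Qed.
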